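(* If a \textsc{2-Visits} instance has a feasible schedule, then it has a feasible schedule in which (1) all secondary visits are placed in gaps (equivalently, no primary visit is placed in a gap), and (2) the secondary visits appear in the schedule in order of non-decreasing induced deadlines.
   Context: \textsc{2-Visits} (primary/secondary formulation): given a non-decreasing sequence of $n$ positive integers $d_1\le\dots\le d_n$, decide whether there exists a schedule of length $2n$ (each position $1,\dots,2n$ holds one visit) containing one primary and one secondary visit of each node $i\in[n]$, such that the primary visit of $i$ is at position at most $d_i$, and the secondary visit of $i$ is either before its primary visit or at most $d_i$ positions after its primary visit. Such a schedule is feasible. The discretized sequence $A=\langle a_1,\dots,a_n\rangle$ is defined by $a_n=d_n$ and $a_i=\min\{a_{i+1}-1,d_i\}$ for $i<n$. A position $p\in[2n]$ is a gap if $p\notin\{a_1,\dots,a_n\}$. If the primary visit of node $i$ is at position $t_i$, its induced deadline is $d_i'=d_i+t_i$. Standing assumptions: all entries of $A$ are positive and all deadlines satisfy $d_i\le 2n$ (so there are exactly $n$ gaps in $[2n]$). *)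

From mathcomp Require Import all_boot.
Set Implicit Arguments. Unset Strict Implicit. Unset Printing Implicit Defensive.

(* Conventions: nodes are 0-indexed, i < n (paper's node i+1);
   d : nat -> nat gives the deadlines d_1..d_n as d 0 .. d (n-1);
   positions are 1-based, 1..2n, as in the paper.
   A schedule is given by t i (position of the primary visit of i) and
   s i (position of the secondary visit of i). *)

Definition instance (n : nat) (d : nat -> nat) : Prop :=
  (forall i, i < n -> 0 < d i) /\
  (forall i j, i <= j -> j < n -> d i <= d j).

Definition schedule (n : nat) (t s : nat -> nat) : Prop :=
  (forall i, i < n -> 1 <= t i <= 2 * n) /\
  (forall i, i < n -> 1 <= s i <= 2 * n) /\
  (forall i j, i < n -> j < n -> t i <> s j) /\
  (forall i j, i < n -> j < n -> t i = t j -> i = j) /\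
  (forall i j, i < n -> j < n -> s i = s j -> i = j).

Definition feasible (n : nat) (d : nat -> nat) (t s : nat -> nat) : Prop :=
  schedule n t s /\
  forall i, i < n ->
    t i <= d i /\ (s i < t i \/ s i <= t i + d i).

(* discr d n k = a_{n-1-k} (0-indexed): a_{n-1} = d_{n-1},
   a_i = min(a_{i+1} - 1, d_i). *)
Fixpoint discr (d : nat -> nat) (n k : nat) : nat :=
  match k with
  | 0 => d n.-1
  | k'.+1 => minn (discr d n k' - 1) (d (n.-1 - k'.+1))
  end.

Definition disc (d : nat -> nat) (n i : nat) : nat := discr d n (n.-1 - i).

Definition gap (d : nat -> nat) (n p : nat) : bool :=
  (1 <= p <= 2 * n) && (p \notin [seq disc d n i | i <- iota 0 n]).

Definition induced (d t : nat -> nat) (i : nat) : nat := d i + t i.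

(* Two exchange arguments, each terminating because a bounded potential grows.
   First, while some discretized deadline a_k carries no primary visit, some node
   h >= k has its primary strictly before a_k (the nodes above a_k are too few
   to fill the positions after a_k); moving it to a_k <= d_k <= d_h, and moving a
   secondary found at a_k back to the old slot, keeps the schedule feasible and
   raises the sum of primary positions.  Once the n distinct values a_k are all
   primary positions, the primaries occupy exactly A and the secondaries exactly
   the gaps.  Second, exchanging the secondaries of an inverted pair of induced
   deadlines keeps feasibility and the set of secondary positions, and raises
   sum_i s_i d'_i by the rearrangement inequality. *)
From mathcomp Require Import all_boot zify.
From Stdlib Require Import Classical.
Set Implicit Arguments. Unset Strict Implicit.

Lemma exists_by_bounded_potential (T : Type) (P Q : T -> Prop) (f : T -> nat) B :
  (forall x, P x -> f x <= B) ->
  (forall x, P x -> ~ Q x -> exists2 y, P y & f x < f y) ->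
  forall x, P x -> exists2 y, P y & Q y.
Proof.
move=> f_le_B improve x Px; have [m] := ubnP (B - f x).
elim: m x Px => // m IH x Px lt_m.
have [Qx | nQx] := classic (Q x); first by exists x.
have [y Py lt_xy] := improve x Px nQx.
by apply: (IH y Py); have := f_le_B y Py; lia.
Qed.

Lemma sub_in_count (T : eqType) (a1 a2 : pred T) (s : seq T) :
  {in s, subpred a1 a2} -> count a1 s <= count a2 s.
Proof.
elim: s => //= x s IH sub12; apply: leq_add.
  by case a1x: (a1 x); rewrite // (sub12 x) ?mem_head.
by apply: IH => y s_y; apply: sub12; rewrite inE s_y orbT.
Qed.

Lemma count_iota_ge m n : count (fun i => m <= i) (iota 0 n) = n - m.
Proof.
elim: n => // n IH; rewrite -addn1 iotaD count_cat IH /= add0n addn0.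
by case: leqP => /=; lia.
Qed.

Lemma ltn_sum_ord n (F G : nat -> nat) h : h < n ->
  (forall i, i < n -> F i <= G i) -> F h < G h ->
  \sum_(i < n) F i < \sum_(i < n) G i.
Proof.
move=> lt_hn le_FG lt_FGh.
rewrite (bigD1 (Ordinal lt_hn)) //= [X in _ < X](bigD1 (Ordinal lt_hn)) //=.
by rewrite -addSn leq_add // leq_sum // => i _; apply: le_FG.
Qed.

Lemma ltn_sum_ord_pair n (F G : nat -> nat) i j : i < n -> j < n -> i != j ->
  (forall k, k < n -> k != i -> k != j -> F k = G k) ->
  F i + F j < G i + G j ->
  \sum_(k < n) F k < \sum_(k < n) G k.
Proof.
move=> lt_in lt_jn neq_ij FG_off lt_FG.
have split_ij (H : nat -> nat) : \sum_(k < n) H k =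
    H i + H j + \sum_(k < n | (k != Ordinal lt_in) && (k != Ordinal lt_jn)) H k.
  rewrite (bigD1 (Ordinal lt_in)) //= -addnA; congr (_ + _).
  by rewrite (bigD1 (Ordinal lt_jn)) //= eq_sym.
rewrite !split_ij (eq_bigr (G \o val)) ?ltn_add2r // => k /andP[ki kj].
by apply: FG_off.
Qed.

Definition transp (a b x : nat) : nat :=
  if x == a then b else if x == b then a else x.

Section Transposition.
Variables a b : nat.

Lemma transpL : transp a b a = b.
Proof. by rewrite /transp eqxx. Qed.

Lemma transpR : transp a b b = a.
Proof. by rewrite /transp eqxx; case: eqP. Qed.

Lemma transp_id x : x != a -> x != b -> transp a b x = x.
Proof. by rewrite /transp => /negbTE-> /negbTE->. Qed.

Lemma transpK : involutive (transp a b).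
Proof.
move=> x; rewrite /transp.
case: (eqVneq x a) => [->|xa]; first by rewrite eqxx; case: eqP.
case: (eqVneq x b) => [->|xb]; first by rewrite eqxx.
by rewrite (negbTE xa) (negbTE xb).
Qed.

Lemma transp_inj : injective (transp a b).
Proof. exact: inv_inj transpK. Qed.

Lemma transp_closed (D : pred nat) x : D a -> D b -> D x -> D (transp a b x).
Proof. by move=> Da Db Dx; rewrite /transp; case: ifP => _; last case: ifP. Qed.

End Transposition.

Definition meets_deadlines (n : nat) (d t s : nat -> nat) : Prop :=
  forall i, i < n -> t i <= d i /\ s i <= t i + d i.

(* The disjunct [s i < t i] of [feasible] is subsumed by [s i <= t i + d i]. *)
Lemma feasibleE n d t s :
  feasible n d t s <-> schedule n t s /\ meets_deadlines n d t s.
Proof.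
split=> [[sch dl] | [sch dl]]; split=> // i lt_in; have [tdi sdi] := dl i lt_in.
  by split=> //; case: sdi; lia.
by split=> //; right.
Qed.

Lemma schedule_relabel_positions n t s (f : nat -> nat) :
  injective f -> (forall p, 1 <= p <= 2 * n -> 1 <= f p <= 2 * n) ->
  schedule n t s -> schedule n (f \o t) (f \o s).
Proof.
move=> f_inj f_range [t_range [s_range [ts_disj [t_inj s_inj]]]].
split; [|split; [|split; [|split]]] => i
  => [lt_in|lt_in|j lt_in lt_jn|j lt_in lt_jn|j lt_in lt_jn] /=.
- exact/f_range/t_range.
- exact/f_range/s_range.
- by move/f_inj; apply: ts_disj.
- by move/f_inj; apply: t_inj.
- by move/f_inj; apply: s_inj.
Qed.

Lemma schedule_swap_secondaries n t s i j : i < n -> j < n ->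
  schedule n t s -> schedule n t (s \o transp i j).
Proof.
move=> lt_in lt_jn [t_range [s_range [ts_disj [t_inj s_inj]]]].
have swap_lt k : k < n -> transp i j k < n.
  exact: (transp_closed (D := fun x => x < n)).
split; [|split; [|split; [|split]]] => // k => [lt_kn|l lt_kn lt_ln|l lt_kn lt_ln] /=.
- exact/s_range/swap_lt.
- exact: ts_disj _ _ lt_kn (swap_lt _ lt_ln).
- by move/(s_inj _ _ (swap_lt _ lt_kn) (swap_lt _ lt_ln))/transp_inj.
Qed.

Section RaisePrimary.
Variables (n : nat) (d t s : nat -> nat) (h p : nat).
Hypotheses (sch : schedule n t s) (dl : meets_deadlines n d t s).
Hypotheses (lt_hn : h < n) (lt_th_p : t h < p) (le_p_dh : p <= d h).
Hypotheses (le_p_2n : p <= 2 * n) (p_free : forall i, i < n -> t i != p).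

Let raise := transp (t h) p.

Lemma raise_primary i : i < n -> raise (t i) = if i == h then p else t i.
Proof.
move=> lt_in; case: (eqVneq i h) => [->|neq_ih]; first exact: transpL.
apply: transp_id (p_free lt_in); apply: contra_neq neq_ih.
by case: sch => _ [_ [_ [t_inj _]]]; apply: t_inj.
Qed.

Lemma raise_primary_ge i : i < n -> t i <= raise (t i).
Proof. by move=> lt_in; rewrite raise_primary //; case: eqP => [->|_] //; exact: ltnW. Qed.

Lemma raise_secondary_le i : i < n -> raise (s i) <= s i.
Proof.
move=> lt_in; have [_ [_ [ts_disj _]]] := sch.
have /eqP neq_si_th : s i <> t h by move=> E; apply: (ts_disj h i).
case: (eqVneq (s i) p) => [->|neq_si_p]; first by rewrite /raise transpR ltnW.
by rewrite /raise transp_id.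
Qed.

Lemma raise_schedule : schedule n (raise \o t) (raise \o s).
Proof.
apply: schedule_relabel_positions sch; first exact: transp_inj.
move=> q q_range; have [t_range _] := sch; have := t_range h lt_hn.
move=> th_range; rewrite /raise.
apply: (@transp_closed _ _ (fun x => 1 <= x <= 2 * n)) => //.
by rewrite le_p_2n (leq_ltn_trans (leq0n _) lt_th_p).
Qed.

Lemma raise_meets_deadlines : meets_deadlines n d (raise \o t) (raise \o s).
Proof.
move=> i lt_in /=; have [tdi sdi] := dl lt_in; split.
  by rewrite raise_primary //; case: eqP => [->|].
apply: leq_trans (raise_secondary_le lt_in) (leq_trans sdi _).
by rewrite leq_add2r raise_primary_ge.
Qed.

Lemma raise_sum_primaries : \sum_(i < n) t i < \sum_(i < n) raise (t i).
Proof.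
apply: (@ltn_sum_ord _ t (raise \o t) _ lt_hn); first exact: raise_primary_ge.
by rewrite /= raise_primary // eqxx.
Qed.

End RaisePrimary.

Definition secondary_weight (n : nat) (d t s : nat -> nat) : nat :=
  \sum_(k < n) s k * induced d t k.

Section SwapSecondaries.
Variables (n : nat) (d t s : nat -> nat) (i j : nat).
Hypotheses (dl : meets_deadlines n d t s) (lt_in : i < n) (lt_jn : j < n).
Hypotheses (lt_si_sj : s i < s j) (inverted : induced d t j < induced d t i).

Let swap := transp i j.

Lemma swap_meets_deadlines : meets_deadlines n d t (s \o swap).
Proof.
move=> k lt_kn /=; have [tdk _] := dl lt_kn; split=> //.
have [_ sdj] := dl lt_jn; move: inverted; rewrite /induced => inv_ij.
case: (eqVneq k i) => [->|neq_ki]; first by rewrite /swap transpL; lia.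
case: (eqVneq k j) => [->|neq_kj]; first by rewrite /swap transpR; lia.
by rewrite /swap transp_id //; have [] := dl lt_kn.
Qed.

Lemma swap_increases_secondary_weight :
  secondary_weight n d t s < secondary_weight n d t (s \o swap).
Proof.
have neq_ij : i != j by apply/eqP => eq_ij; move: lt_si_sj; rewrite eq_ij ltnn.
apply: (@ltn_sum_ord_pair _ (fun k => s k * induced d t k)
  (fun k => s (swap k) * induced d t k) _ _ lt_in lt_jn neq_ij) => [k _ neq_ki neq_kj|].
  by rewrite /= /swap transp_id.
by rewrite /= /swap transpL transpR; nia.
Qed.

End SwapSecondaries.

Lemma exists_sorted_secondaries n d t s (good : pred nat) :
  schedule n t s -> meets_deadlines n d t s -> (forall i, i < n -> good (s i)) ->
  exists s', [/\ schedule n t s', meets_deadlines n d t s',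
    forall i, i < n -> good (s' i) &
    forall i j, i < n -> j < n -> s' i < s' j -> induced d t i <= induced d t j].
Proof.
move=> sch dl good_s.
pose P s1 := [/\ schedule n t s1, meets_deadlines n d t s1 & forall i, i < n -> good (s1 i)].
pose in_order s1 := forall i j, i < n -> j < n -> s1 i < s1 j -> induced d t i <= induced d t j.
suff [s' [sch' dl' good'] in_order'] : exists2 s', P s' & in_order s' by exists s'.
apply: (@exists_by_bounded_potential _ P in_order (secondary_weight n d t)
  (\sum_(k < n) 2 * n * induced d t k) _ _ s (And3 sch dl good_s)).
- move=> s1 [[_ [s_range _]] _ _]; apply: leq_sum => k _.
  by rewrite leq_mul2r; case/andP: (s_range k (ltn_ord k)) => _ ->; rewrite orbT.
- move=> s1 [sch1 dl1 good1] not_in_order.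
  have [i [j [lt_in lt_jn lt_sij inv_ij]]] : exists i j, [/\ i < n, j < n, s1 i < s1 j &
      induced d t j < induced d t i].
    apply: NNPP => none; apply: not_in_order => i j lt_in lt_jn lt_sij.
    by rewrite leqNgt; apply/negP => inv_ij; apply: none; exists i, j.
  exists (s1 \o transp i j); last exact: swap_increases_secondary_weight.
  split; [exact: schedule_swap_secondaries | exact: swap_meets_deadlines |].
  move=> k lt_kn; apply: good1; exact: (transp_closed (D := fun x => x < n)).
Qed.

Definition covers_disc (n : nat) (d t : nat -> nat) : Prop :=
  forall k, k < n -> exists2 i, i < n & t i = disc d n k.

Lemma covers_disc_secondary_gap n d t s : schedule n t s -> covers_disc n d t ->
  forall i, i < n -> gap d n (s i).
Proof.
move=> [_ [s_range [ts_disj _]]] cover i lt_in; rewrite /gap s_range //=.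
apply/mapP => -[k]; rewrite mem_iota => /andP[_ lt_kn] eq_si.
have [h lt_hn eq_th] := cover k lt_kn.
by apply: (ts_disj h i); rewrite ?eq_th ?eq_si.
Qed.

Section Discretization.
Variables (n : nat) (d : nat -> nat).

Lemma disc_last : disc d n n.-1 = d n.-1.
Proof. by rewrite /disc subnn. Qed.

Lemma disc_rec m : m.+1 < n -> disc d n m = minn (disc d n m.+1 - 1) (d m).
Proof.
move=> lt_m1n; rewrite /disc.
have -> : n.-1 - m = (n.-1 - m.+1).+1 by lia.
by rewrite [LHS]/=; have -> : n.-1 - (n.-1 - m.+1).+1 = m by lia.
Qed.

Lemma disc_le m : m < n -> disc d n m <= d m.
Proof.
move=> lt_mn; case: (ltnP m.+1 n) => [lt_m1n|le_n_m1]; first by rewrite disc_rec ?geq_minr.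
have -> : m = n.-1 by lia.
by rewrite disc_last.
Qed.

Hypothesis disc_pos : forall m, m < n -> 0 < disc d n m.

Lemma disc_ltS m : m.+1 < n -> disc d n m < disc d n m.+1.
Proof.
move=> lt_m1n; rewrite disc_rec //; have := disc_pos lt_m1n.
have := geq_minl (disc d n m.+1 - 1) (d m); lia.
Qed.

Lemma disc_lt m m' : m < m' -> m' < n -> disc d n m < disc d n m'.
Proof.
elim: m' => // m' IH; rewrite ltnS leq_eqVlt => /predU1P[-> | lt_mm'] lt_m'n.
  exact: disc_ltS.
exact: ltn_trans (IH lt_mm' (ltnW lt_m'n)) (disc_ltS lt_m'n).
Qed.

Lemma disc_inj : {in gtn n &, injective (disc d n)}.
Proof.
move=> m m' lt_mn lt_m'n eq_mm'.
case: (ltngtP m m') => // [lt_mm' | lt_m'm].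
  by have := disc_lt lt_mm' lt_m'n; rewrite eq_mm' ltnn.
by have := disc_lt lt_m'm lt_mn; rewrite eq_mm' ltnn.
Qed.

Lemma covers_disc_primary_not_gap t : covers_disc n d t ->
  forall i, i < n -> ~~ gap d n (t i).
Proof.
move=> cover i lt_in; rewrite /gap negb_and negbK; apply/orP; right.
set A := [seq disc d n k | k <- iota 0 n].
have uniq_A : uniq A.
  by rewrite map_inj_in_uniq ?iota_uniq // => m m'; rewrite !mem_iota; apply: disc_inj.
have A_sub : {subset A <= [seq t k | k <- iota 0 n]}.
  move=> q /mapP[k]; rewrite mem_iota => /andP[_ lt_kn] ->.
  by have [h lt_hn <-] := cover k lt_kn; rewrite map_f // mem_iota.
have le_size : size [seq t k | k <- iota 0 n] <= size A by rewrite !size_map.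
have [_ ->] := uniq_min_size uniq_A A_sub le_size.
by rewrite map_f // mem_iota.
Qed.

Hypothesis d_mono : forall i j, i <= j -> j < n -> d i <= d j.

Section PrimaryCount.
Variable t : nat -> nat.
Hypothesis t_inj : forall i j, i < n -> j < n -> t i = t j -> i = j.
Hypothesis t_le_d : forall i, i < n -> t i <= d i.

Lemma count_primaries_at q : count (fun i => t i == q) (iota 0 n) <= 1.
Proof.
have uniq_t : uniq [seq t i | i <- iota 0 n].
  rewrite map_inj_in_uniq ?iota_uniq // => i j.
  by rewrite !mem_iota => /andP[_ lt_in] /andP[_ lt_jn]; apply: t_inj.
by rewrite -(count_map t (pred1 q)) count_uniq_mem // leq_b1.
Qed.

Lemma count_primaries_above_last : count (fun i => d n.-1 < t i) (iota 0 n) = 0.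
Proof.
rewrite (eq_in_count (a2 := pred0)) ?count_pred0 // => i.
rewrite mem_iota => /andP[_ lt_in] /=; rewrite ltnNge (leq_trans (t_le_d lt_in)) //.
by apply: d_mono; lia.
Qed.

(* If [a_m = d_m], only the [n.-1 - m] nodes above [m] can have their primary
   after [a_m]; otherwise [a_m = a_(m+1) - 1], and going down from [a_(m+1)] to
   [a_m] adds the single position [a_(m+1)] but no node. *)
Lemma count_primaries_above m : m < n ->
  count (fun i => disc d n m < t i) (iota 0 n) <= n.-1 - m.
Proof.
have [k] := ubnP (n.-1 - m); elim: k m => // k IH m lt_k lt_mn.
case: (ltnP m.+1 n) => [lt_m1n|le_n_m1]; last first.
  have -> : m = n.-1 by lia.
  by rewrite disc_last count_primaries_above_last.
have IHm1 := IH m.+1 ltac:(lia) lt_m1n; have pos_m1 := disc_pos lt_m1n.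
rewrite disc_rec //; case: (leqP (disc d n m.+1 - 1) (d m)) => [le_ad|lt_da].
- pose above := fun i => disc d n m.+1 < t i; pose at_a := fun i => t i == disc d n m.+1.
  have sub_above : subpred (fun i => disc d n m.+1 - 1 < t i) (predU above at_a).
    by move=> i /=; rewrite /above /at_a; lia.
  apply: leq_trans (sub_count sub_above _) _.
  have := count_predUI above at_a (iota 0 n); have := count_primaries_at (disc d n m.+1).
  rewrite /above /at_a in IHm1 *; lia.
- have sub_above : {in iota 0 n, subpred (fun i => d m < t i) (fun i => m < i)}.
    move=> i; rewrite mem_iota => /andP[_ lt_in] /= lt_dm_ti.
    rewrite ltnNge; apply/negP => le_im.
    by have := t_le_d lt_in; have := d_mono le_im lt_mn; lia.
  by apply: leq_trans (sub_in_count sub_above) _; rewrite count_iota_ge; lia.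
Qed.

Lemma exists_primary_below k : k < n -> (forall i, i < n -> t i != disc d n k) ->
  exists2 h, k <= h < n & t h < disc d n k.
Proof.
move=> lt_kn free.
have : has (fun i => (k <= i) && (t i < disc d n k)) (iota 0 n).
  apply: contraT => /hasPn none.
  have : count (fun i => k <= i) (iota 0 n) <= count (fun i => disc d n k < t i) (iota 0 n).
    apply: sub_in_count => i iota_i le_ki /=; have := none i iota_i.
    move: iota_i; rewrite mem_iota => /andP[_ lt_in]; have := free i lt_in.
    by rewrite /= le_ki /=; lia.
  by rewrite count_iota_ge; have := count_primaries_above lt_kn; lia.
case/hasP => h; rewrite mem_iota => /andP[_ lt_hn] /andP[le_kh lt_th].
by exists h; rewrite ?le_kh.
Qed.

End PrimaryCount.

Hypothesis d_le_2n : forall i, i < n -> d i <= 2 * n.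

Lemma exists_covering_schedule t s : schedule n t s -> meets_deadlines n d t s ->
  exists t' s', [/\ schedule n t' s', meets_deadlines n d t' s' & covers_disc n d t'].
Proof.
move=> sch dl.
pose P (x : (nat -> nat) * (nat -> nat)) := schedule n x.1 x.2 /\ meets_deadlines n d x.1 x.2.
suff [[t' s'] [sch' dl'] cover] : exists2 x, P x & covers_disc n d x.1 by exists t', s'.
apply: (@exists_by_bounded_potential _ P _ (fun x => \sum_(i < n) x.1 i)
  (\sum_(i < n) d i) _ _ (t, s) (conj sch dl)).
- move=> [t1 s1] [_ dl1]; apply: leq_sum => i _; exact: (dl1 i (ltn_ord i)).1.
- move=> [t1 s1] [sch1 dl1] /= not_cover.
  have [k lt_kn free] : exists2 k, k < n & forall i, i < n -> t1 i != disc d n k.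
    apply: NNPP => none; apply: not_cover => k lt_kn; apply: NNPP => no_i.
    by apply: none; exists k => // i lt_in; apply/eqP => eq_ti; apply: no_i; exists i.
  have [_ [_ [_ [t_inj _]]]] := sch1.
  have [h /andP[le_kh lt_hn] lt_th] :=
    exists_primary_below t_inj (fun i lt_in => (dl1 i lt_in).1) lt_kn free.
  have le_ak_dh : disc d n k <= d h := leq_trans (disc_le lt_kn) (d_mono le_kh lt_hn).
  have le_ak_2n : disc d n k <= 2 * n := leq_trans (disc_le lt_kn) (d_le_2n lt_kn).
  exists (transp (t1 h) (disc d n k) \o t1, transp (t1 h) (disc d n k) \o s1).
    split; first exact: raise_schedule sch1 lt_hn lt_th le_ak_2n.
    exact: raise_meets_deadlines sch1 dl1 lt_hn lt_th le_ak_dh free.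
  exact: raise_sum_primaries sch1 lt_hn lt_th free.
Qed.

End Discretization.

Theorem theorem1 (n : nat) (d : nat -> nat) :
  instance n d ->
  (forall i, i < n -> 0 < disc d n i) ->
  (forall i, i < n -> d i <= 2 * n) ->
  (exists t s, feasible n d t s) ->
  exists t s, feasible n d t s /\
    (forall i, i < n -> gap d n (s i)) /\
    (forall i, i < n -> ~~ gap d n (t i)) /\
    (forall i j, i < n -> j < n -> s i < s j ->
       induced d t i <= induced d t j).
Proof.
move=> [_ d_mono] disc_pos d_le_2n [t0 [s0 /feasibleE [sch0 dl0]]].
have [t [s1 [sch1 dl1 cover]]] :=
  exists_covering_schedule disc_pos d_mono d_le_2n sch0 dl0.
have [s [sch dl gaps in_order]] :=
  exists_sorted_secondaries sch1 dl1 (covers_disc_secondary_gap sch1 cover).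
exists t, s; split; first exact/feasibleE.
by split=> //; split=> //; apply: covers_disc_primary_not_gap.
Qed.
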